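(* Let $N\ge 2$ and let $\mathcal{A}$ be an $M\times N$ circular Florentine rectangle over $\mathbb{Z}_N$ with rows $\pi_0,\dots,\pi_{M-1}$ (each a permutation of $\mathbb{Z}_N$). Then for all $0\le i\neq r\le M-1$ and every $l'\in\mathbb{Z}_N$, the equation $\pi_i(t)=\pi_r(t+l')$ (with $t+l'$ taken modulo $N$) has exactly one solution $t\in\mathbb{Z}_N$.
   Context: An $M\times N$ circular Florentine rectangle (CFR) over $\mathbb{Z}_N$ is an $M\times N$ array whose rows, viewed as maps $\pi_i:\mathbb{Z}_N\to\mathbb{Z}_N$ ($\pi_i(x)$ is the entry in row $i$, column $x$), are permutations of $\mathbb{Z}_N$, and such that for every $m\in\mathbb{Z}_N\setminus\{0\}$ and all $0\le i,j\le M-1$, $x,y\in\mathbb{Z}_N$, one has $(\pi_i(x),\pi_i(x+m))=(\pi_j(y),\pi_j(y+m))$ (indices modulo $N$) if and only if $i=j$ and $x=y$. *)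

From mathcomp Require Import all_boot all_order all_fingroup.
Set Implicit Arguments. Unset Strict Implicit. Unset Printing Implicit Defensive.

Lemma ord_pos N (x : 'I_N) : 0 < N.
Proof. exact: leq_ltn_trans (leq0n x) (ltn_ord x). Qed.

Definition zadd N (x y : 'I_N) : 'I_N :=
  Ordinal (ltn_pmod (x + y) (ord_pos x)).

Definition circular_florentine M N (pi : 'I_M -> {perm 'I_N}) : Prop :=
  forall (m : 'I_N), m != 0 :> nat ->
  forall (i j : 'I_M) (x y : 'I_N),
    (pi i x, pi i (zadd x m)) = (pi j y, pi j (zadd y m)) <-> (i = j /\ x = y).

From mathcomp Require Import all_boot all_order all_fingroup.
From mathcomp Require Import ssralg zmodp.
Set Implicit Arguments. Unset Strict Implicit. Unset Printing Implicit Defensive.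

(* Let sigma = pi_r^-1 o pi_i. Then t solves pi_i(t) = pi_r(t + l) exactly when
   sigma(t) - t = l. Two distinct solutions t1, t1 + m would give the same pair
   (pi_i(t1), pi_i(t1 + m)) in rows i and r at shift m, which the Florentine
   property forbids; so t |-> sigma(t) - t is injective on the finite set Z_N,
   hence bijective, and every l is attained exactly once. *)

Import GRing.Theory.
Local Open Scope ring_scope.

Lemma zaddE n (x y : 'I_n.+1) : zadd x y = x + y.
Proof. exact: val_inj. Qed.

Section CircularFlorentine.

Variables (M n : nat) (pi : 'I_M -> {perm 'I_n.+1}).
Hypothesis florentine : circular_florentine pi.

Lemma florentine_shift_uniq (i r : 'I_M) (l t1 t2 : 'I_n.+1) : i != r ->
  pi i t1 = pi r (t1 + l) -> pi i t2 = pi r (t2 + l) -> t1 = t2.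
Proof.
move=> neq_ir sol1 sol2; apply/eqP; rewrite eq_sym -subr_eq0.
apply: contraR neq_ir => m_neq0; apply/eqP.
have shift1 : t1 + (t2 - t1) = t2 by rewrite addrC subrK.
have shift2 : t1 + l + (t2 - t1) = t2 + l by rewrite addrAC shift1.
apply: (proj1 ((florentine m_neq0 i r t1 (t1 + l)).1 _)).
by rewrite !zaddE shift1 shift2 sol1 sol2.
Qed.

Variables (i r : 'I_M).

Definition row_offset (t : 'I_n.+1) : 'I_n.+1 := ((pi r)^-1)%g (pi i t) - t.

Lemma row_offsetP t : pi i t = pi r (t + row_offset t).
Proof. by rewrite /row_offset addrC subrK permKV. Qed.

Lemma row_offset_inj : i != r -> injective row_offset.
Proof.
move=> neq_ir t1 t2 eq_offset.
by apply: (florentine_shift_uniq neq_ir (row_offsetP t1)); rewrite eq_offset row_offsetP.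
Qed.

End CircularFlorentine.

Theorem lemma3 (M N : nat) (pi : 'I_M -> {perm 'I_N}) :
  2 <= N -> circular_florentine pi ->
  forall (i r : 'I_M), i != r ->
  forall l' : 'I_N, exists! t : 'I_N, pi i t = pi r (zadd t l').
Proof.
case: N pi => [//|n] pi _ florentine i r neq_ir l.
have [inv_offset offsetK inv_offsetK] := injF_bij (row_offset_inj florentine neq_ir).
have sol_l := row_offsetP pi i r (inv_offset l); rewrite inv_offsetK in sol_l.
exists (inv_offset l); split=> [|t]; rewrite zaddE // => sol_t.
exact: (florentine_shift_uniq florentine neq_ir sol_l sol_t).
Qed.
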